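(* Let $N\ge 2$, $M\ge 2$, $N_e\ge 2$ be integers, $\theta,\phi\in(-\pi/2,\pi/2)$, $p_t>0$, and let $c_3,c_4\in\mathbb{C}\setminus\{0\}$, $\sigma_r>0$, $L\ge 1$. Let $\mathbf{a}=\mathbf{a}(\theta)\in\mathbb{C}^N$, $\mathbf{b}=\mathbf{b}(\theta)\in\mathbb{C}^M$, $\mathbf{c}=\mathbf{c}(\phi)\in\mathbb{C}^{N_e}$ be the steering vectors and $\mathbf{a}',\mathbf{b}',\mathbf{c}'$ their derivatives (defined in the context). For a Hermitian positive semidefinite $\mathbf{R}_x\in\mathbb{C}^{N\times N}$ with $\mathbf{a}^H\mathbf{R}_x\mathbf{a}>0$ define $$\mathrm{CRB}(\theta)=\frac{Q}{\|\mathbf{b}'\|^2\mathbf{a}^H\mathbf{R}_x\mathbf{a}+\|\mathbf{b}\|^2\mathbf{a}'^H\mathbf{R}_x\mathbf{a}'-\frac{\big|\|\mathbf{b}\|^2\mathbf{a}^H\mathbf{R}_x\mathbf{a}'\big|^2}{\|\mathbf{b}\|^2\mathbf{a}^H\mathbf{R}_x\mathbf{a}}},\qquad Q=\frac{\sigma_r^2}{2|c_3|^2L},$$ $$\mathrm{CRB}(\phi)=\frac{\sigma_r^2}{2|c_4|^2L\|\mathbf{c}'\|^2\,\mathbf{a}^H\mathbf{R}_x\mathbf{a}}.$$ Consider the problem of minimizing $\mathrm{CRB}(\theta)-\mathrm{CRB}(\phi)$ over all Hermitian $\mathbf{R}_x\succeq 0$ with $\mathrm{tr}(\mathbf{R}_x)=p_t$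 (and $\mathbf{a}^H\mathbf{R}_x\mathbf{a}>0$). Then every optimal solution $\mathbf{R}_x$ lies in the span of $\mathbf{a}/\|\mathbf{a}\|$ and $\mathbf{a}'/\|\mathbf{a}'\|$, i.e. $\mathbf{R}_x=\mathbf{U}\boldsymbol{\Lambda}\mathbf{U}^H$ for some $2\times 2$ Hermitian positive semidefinite $\boldsymbol{\Lambda}$, where $\mathbf{U}=[\mathbf{a}/\|\mathbf{a}\|,\ \mathbf{a}'/\|\mathbf{a}'\|]$.
   Context: $j=\sqrt{-1}$. Steering vectors: $\mathbf{a}(\theta)\in\mathbb{C}^N$ has $i$-th entry $e^{-j\pi\sin(\theta)\frac{N-(2i-1)}{2}}$, $i=1,\dots,N$; $\mathbf{b}(\theta)\in\mathbb{C}^M$ has $i$-th entry $e^{-j\pi\sin(\theta)\frac{M-(2i-1)}{2}}$; $\mathbf{c}(\phi)\in\mathbb{C}^{N_e}$ has $i$-th entry $e^{-j\pi\sin(\phi)\frac{N_e-(2i-1)}{2}}$. $\mathbf{a}'=\partial\mathbf{a}/\partial\theta$, $\mathbf{b}'=\partial\mathbf{b}/\partial\theta$, $\mathbf{c}'=\partial\mathbf{c}/\partial\phi$. $\theta$ is the target's angle at the base station and $\phi$ the target's angle at a sensing eavesdropper; $\mathbf{R}_x$ is the transmit sample covariance matrix. *)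

From HB Require Import structures.
From mathcomp Require Import all_boot all_order all_algebra.
From mathcomp Require Import all_classical all_reals.
From mathcomp Require Import topology normedtype derive trigo.
From mathcomp Require Import complex.

Set Implicit Arguments.
Unset Strict Implicit.
Unset Printing Implicit Defensive.

Import Order.TTheory GRing.Theory Num.Theory numFieldNormedType.Exports.
Local Open Scope ring_scope.
Local Open Scope complex_scope.

Section Defs.
Variable R : realType.
Local Notation C := R[i].

Definition adjmx m n (A : 'M[C]_(m, n)) : 'M[C]_(n, m) :=
  (map_mx (fun z : C => z^*) A)^T.

Definition qform n (u : 'cV[C]_n) (X : 'M[C]_n) (v : 'cV[C]_n) : C :=
  (adjmx u *m X *m v) ord0 ord0.

Definition nrm2 n (v : 'cV[C]_n) : C := \sum_(i < n) `|v i ord0| ^+ 2.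
Definition vnorm n (v : 'cV[C]_n) : C := sqrtC (nrm2 v).

Definition is_herm n (X : 'M[C]_n) : Prop := adjmx X = X.
Definition is_psd n (X : 'M[C]_n) : Prop := forall v : 'cV[C]_n, 0 <= qform v X v.

(* phase of the i-th entry (0-indexed k, i = k+1):
   pi * sin(t) * (n - (2i-1)) / 2 *)
Definition sphase (n : nat) (k : nat) (t : R) : R :=
  pi * sin t * (n%:R - (2 * k + 1)%:R) / 2.

(* steering vector: k-th entry e^{-j sphase} = cos(sphase) - j sin(sphase) *)
Definition steer (n : nat) (t : R) : 'cV[C]_n :=
  \col_(k < n) ((cos (sphase n k t)) +i* (- sin (sphase n k t))).

Definition dsteer (n : nat) (t : R) : 'cV[C]_n :=
  \col_(k < n) ((derive1 (fun s => cos (sphase n k s)) t)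
                +i* (derive1 (fun s => - sin (sphase n k s)) t)).

Definition crb_theta (N M : nat) (theta sigr : R) (c3 : C) (L : nat)
    (Rx : 'M[C]_N) : C :=
  let a := steer N theta in let a' := dsteer N theta in
  let b := steer M theta in let b' := dsteer M theta in
  let Q := (sigr ^+ 2)%:C / (2 * `|c3| ^+ 2 * L%:R) in
  Q / (nrm2 b' * qform a Rx a + nrm2 b * qform a' Rx a'
       - `|nrm2 b * qform a Rx a'| ^+ 2 / (nrm2 b * qform a Rx a)).

Definition crb_phi (N Ne : nat) (theta phi sigr : R) (c4 : C) (L : nat)
    (Rx : 'M[C]_N) : C :=
  let a := steer N theta in let c' := dsteer Ne phi in
  (sigr ^+ 2)%:C / (2 * `|c4| ^+ 2 * L%:R * nrm2 c' * qform a Rx a).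

Definition objective (N M Ne : nat) (theta phi sigr : R) (c3 c4 : C) (L : nat)
    (Rx : 'M[C]_N) : C :=
  crb_theta M theta sigr c3 L Rx - crb_phi Ne theta phi sigr c4 L Rx.

Definition feasible (N : nat) (theta pt : R) (Rx : 'M[C]_N) : Prop :=
  is_herm Rx /\ is_psd Rx /\ \tr Rx = pt%:C /\ 0 < qform (steer N theta) Rx (steer N theta).

Definition optimal (N M Ne : nat) (theta phi pt sigr : R) (c3 c4 : C) (L : nat)
    (Rx : 'M[C]_N) : Prop :=
  feasible theta pt Rx /\
  forall Rx' : 'M[C]_N, feasible theta pt Rx' ->
    objective M Ne theta phi sigr c3 c4 L Rx <= objective M Ne theta phi sigr c3 c4 L Rx'.

Definition Umx (N : nat) (theta : R) : 'M[C]_(N, 2) :=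
  row_mx ((vnorm (steer N theta))^-1 *: steer N theta)
         ((vnorm (dsteer N theta))^-1 *: dsteer N theta).

End Defs.

(* Every entry of a = a(theta) has modulus one, so conj(a_k) a'_k = -j dphi_k,
   where dphi_k is the derivative of the k-th phase; these derivatives are
   symmetric about the array centre, so they sum to zero and a^H a' = 0.
   Let P = U U^H be the orthogonal projector onto span{a, a'} and
   d = tr((I - P) Rx (I - P)) >= 0.  The matrix P Rx P + (d / ||a'||^2) a' a'^H
   is again feasible, with the same a^H Rx a and a^H Rx a' but with a'^H Rx a'
   increased by d ||a'||^2.  This leaves CRB(phi) unchanged and, since the Schur
   complement a'^H Rx a' - |a^H Rx a'|^2 / a^H Rx a is nonnegative, strictly
   decreases CRB(theta) when d > 0.  Hence an optimal Rx has d = 0, which for a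
   PSD matrix means Rx (I - P) = 0, so Rx = P Rx P = U (U^H Rx U) U^H. *)

From HB Require Import structures.
From mathcomp Require Import all_boot all_order all_algebra.
From mathcomp Require Import all_classical all_reals.
From mathcomp Require Import topology normedtype derive trigo realfun.
From mathcomp Require Import complex.
From mathcomp Require Import ring zify.

Set Implicit Arguments.
Unset Strict Implicit.
Unset Printing Implicit Defensive.

Import Order.TTheory GRing.Theory Num.Theory numFieldNormedType.Exports.
Local Open Scope ring_scope.
Local Open Scope complex_scope.

Lemma col_mulmx (T : pzSemiRingType) m n p (A : 'M[T]_(m, n)) (B : 'M[T]_(n, p)) j :
  col j (A *m B) = A *m col j B.
Proof. by apply/matrixP => i k; rewrite !mxE; apply: eq_bigr => l _; rewrite !mxE. Qed.

Section Adjoint.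
Variable R : realType.
Local Notation C := R[i].
Implicit Types m n p : nat.

Lemma adjmxE m n (A : 'M[C]_(m, n)) i j : adjmx A i j = (A j i)^*%R.
Proof. by rewrite /adjmx !mxE. Qed.

Lemma adjmxK m n (A : 'M[C]_(m, n)) : adjmx (adjmx A) = A.
Proof. by apply/matrixP => i j; rewrite !adjmxE conjCK. Qed.

Lemma adjmxM m n p (A : 'M[C]_(m, n)) (B : 'M[C]_(n, p)) :
  adjmx (A *m B) = adjmx B *m adjmx A.
Proof.
apply/matrixP => i j; rewrite !mxE rmorph_sum.
by apply: eq_bigr => k _; rewrite !mxE rmorphM mulrC.
Qed.

Lemma adjmxD m n (A B : 'M[C]_(m, n)) : adjmx (A + B) = adjmx A + adjmx B.
Proof. by apply/matrixP => i j; rewrite !mxE rmorphD. Qed.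

Lemma adjmxN m n (A : 'M[C]_(m, n)) : adjmx (- A) = - adjmx A.
Proof. by apply/matrixP => i j; rewrite !mxE rmorphN. Qed.

Lemma adjmxZ m n c (A : 'M[C]_(m, n)) : adjmx (c *: A) = c^*%R *: adjmx A.
Proof. by apply/matrixP => i j; rewrite !mxE rmorphM. Qed.

Lemma adjmx1 n : adjmx (1%:M : 'M[C]_n) = 1%:M.
Proof. by apply/matrixP => i j; rewrite !mxE eq_sym rmorph_nat. Qed.

Lemma adjmx_row m n1 n2 (A : 'M[C]_(m, n1)) (B : 'M[C]_(m, n2)) :
  adjmx (row_mx A B) = col_mx (adjmx A) (adjmx B).
Proof. by rewrite /adjmx map_row_mx tr_row_mx. Qed.

Lemma adjmx_col n (A : 'M[C]_n) i : adjmx (col i A) = row i (adjmx A).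
Proof. by apply/matrixP => j k; rewrite !mxE. Qed.

Lemma adjmx_mul_conj n (u v : 'cV[C]_n) :
  (adjmx v *m u) ord0 ord0 = ((adjmx u *m v) ord0 ord0)^*%R.
Proof. by rewrite -adjmxE adjmxM adjmxK. Qed.

Lemma adjmx_mul_self n (v : 'cV[C]_n) : (adjmx v *m v) ord0 ord0 = nrm2 v.
Proof. by rewrite mxE; apply: eq_bigr => k _; rewrite adjmxE normCK mulrC. Qed.

Lemma nrm2_ge0 n (v : 'cV[C]_n) : 0 <= nrm2 v.
Proof. by apply: sumr_ge0 => k _; rewrite exprn_ge0. Qed.

Lemma nrm2_eq0 n (v : 'cV[C]_n) : nrm2 v = 0 -> v = 0.
Proof.
move=> /eqP; rewrite /nrm2 psumr_eq0 => [/allP v0|k _]; last by rewrite exprn_ge0.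
apply/matrixP => i j; rewrite (ord1 j) mxE.
by move: (v0 i (mem_index_enum i)); rewrite /= sqrf_eq0 normr_eq0 => /eqP.
Qed.

Lemma nrm2_gt0 n (v : 'cV[C]_n) k : v k ord0 != 0 -> 0 < nrm2 v.
Proof.
move=> vk; rewrite lt_def nrm2_ge0 andbT; apply/eqP => /nrm2_eq0 v0.
by move: vk; rewrite v0 mxE eqxx.
Qed.

End Adjoint.

Section QuadraticForm.
Variable R : realType.
Local Notation C := R[i].
Variable n : nat.
Implicit Types (X Y : 'M[C]_n) (u v w : 'cV[C]_n).

Lemma qform_conj X u v : is_herm X -> (qform u X v)^*%R = qform v X u.
Proof. by move=> hX; rewrite /qform -adjmxE !adjmxM adjmxK hX mulmxA. Qed.

Lemma qformD X Y v w : qform v (X + Y) w = qform v X w + qform v Y w.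
Proof. by rewrite /qform mulmxDr mulmxDl mxE. Qed.

Lemma qformZ X c v w : qform v (c *: X) w = c * qform v X w.
Proof. by rewrite /qform -scalemxAr -scalemxAl mxE. Qed.

Lemma qform_outer u u' v w :
  qform v (u *m adjmx u') w = (adjmx v *m u) ord0 ord0 * (adjmx u' *m w) ord0 ord0.
Proof. by rewrite /qform !mulmxA -(mulmxA (adjmx v *m u)) [in LHS]mxE big_ord1. Qed.

Lemma qform_mul m (A : 'M[C]_(m, n)) X (B : 'M[C]_(n, m)) (v w : 'cV[C]_m) :
  qform v (A *m X *m B) w = qform (adjmx A *m v) X (B *m w).
Proof. by rewrite /qform adjmxM adjmxK !mulmxA. Qed.

Lemma qform_subZ X u v t :
  qform (u - t *: v) X (u - t *: v) =
  qform u X u - t * qform u X v - t^*%R * qform v X u + t^*%R * t * qform v X v.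
Proof.
rewrite /qform adjmxD adjmxN adjmxZ -!mulmxA.
rewrite !(mulmxDr, mulmxDl, mulmxN, mulNmx) -!scalemxAr -!scalemxAl !mxE.
ring.
Qed.

Lemma herm_adj_sandwich m X (U : 'M[C]_(n, m)) :
  is_herm X -> is_herm (adjmx U *m X *m U).
Proof. by move=> hX; rewrite /is_herm !adjmxM adjmxK hX !mulmxA. Qed.

Lemma psd_adj_sandwich m X (U : 'M[C]_(n, m)) :
  is_psd X -> is_psd (adjmx U *m X *m U).
Proof. by move=> hX v; rewrite qform_mul adjmxK; apply: hX. Qed.

Section PSD.
Variable X : 'M[C]_n.
Hypotheses (hX : is_herm X) (psdX : is_psd X).

(* Positivity of the form at w - t X w, for small t > 0, forces X w = 0. *)
Lemma psd_qform_eq0 w : qform w X w = 0 -> X *m w = 0.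
Proof.
move=> w0; set u := X *m w.
have e1 : qform w X u = nrm2 u by rewrite -adjmx_mul_self /u /qform adjmxM hX mulmxA.
have e2 : qform u X w = nrm2 u.
  by rewrite -qform_conj // e1 geC0_conj // nrm2_ge0.
have n0 := nrm2_ge0 u; have m0 : 0 <= qform u X u := psdX u.
set nn := nrm2 u in e1 e2 n0 *; set mm := qform u X u in m0 *.
have m1 : 0 < mm + 1 by rewrite ltr_wpDl.
set t := nn / (mm + 1).
have tR : t^*%R = t by rewrite geC0_conj // divr_ge0 // ltW.
have := psdX (w - t *: u); rewrite qform_subZ w0 e1 e2 tR.
have -> : 0 - t * nn - t * nn + t * t * mm = - (nn ^+ 2 * (mm + 2)) / (mm + 1) ^+ 2.
  by rewrite /t; field; rewrite gt_eqF.
rewrite pmulr_lge0 ?invr_gt0 ?exprn_gt0 // oppr_ge0 => le0.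
have m2 : 0 < mm + 2 by rewrite ltr_wpDl.
have /eqP : nn ^+ 2 * (mm + 2) = 0.
  by apply/eqP; rewrite eq_le le0 mulr_ge0 ?exprn_ge0 // ltW.
rewrite mulf_eq0 (gt_eqF m2) orbF expf_eq0 /= => /eqP; exact: nrm2_eq0.
Qed.

Lemma psd_schur u v : 0 < qform u X u ->
  0 <= qform v X v - `|qform u X v| ^+ 2 / qform u X u.
Proof.
move=> xgt0; set x := qform u X u in xgt0 *.
set z := qform u X v; set y := qform v X v.
have := psdX (v - (z / x) *: u).
have zx : (z / x)^*%R = z^*%R / x.
  by rewrite fmorph_div; congr (_ / _); exact: geC0_conj (ltW xgt0).
rewrite qform_subZ -/y -/x -(qform_conj _ _ hX) -/z zx.
by rewrite normCK (_ : _ + _ = y - z * z^*%R / x) //; field; rewrite gt_eqF.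
Qed.

Lemma mxtrace_sandwich W : is_herm W ->
  \tr (W *m X *m W) = \sum_i qform (col i W) X (col i W).
Proof.
move=> hW; apply: eq_bigr => i _.
rewrite /qform adjmx_col hW -!row_mul !mxE; apply: eq_bigr => k _.
by rewrite !mxE.
Qed.

Lemma mxtrace_sandwich_ge0 W : is_herm W -> 0 <= \tr (W *m X *m W).
Proof. by move=> hW; rewrite mxtrace_sandwich // sumr_ge0. Qed.

Lemma mxtrace_sandwich_eq0 W : is_herm W -> \tr (W *m X *m W) = 0 -> X *m W = 0.
Proof.
move=> hW; rewrite mxtrace_sandwich // => /eqP.
rewrite psumr_eq0 => [/allP W0|i _]; last exact: psdX.
apply/matrixP => j i; have /eqP/psd_qform_eq0/matrixP := W0 i (mem_index_enum i).
by move=> /(_ j ord0); rewrite -col_mulmx !mxE.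
Qed.

End PSD.
End QuadraticForm.

Section Projection.
Variable R : realType.
Local Notation C := R[i].
Variables (n : nat) (u v : 'cV[C]_n).

Definition proj_span2 : 'M[C]_n :=
  (nrm2 u)^-1 *: (u *m adjmx u) + (nrm2 v)^-1 *: (v *m adjmx v).

Lemma vnorm_mul_conj (w : 'cV[C]_n) : (vnorm w)^-1 * ((vnorm w)^-1)^*%R = (nrm2 w)^-1.
Proof.
have h : 0 <= (vnorm w)^-1 by rewrite invr_ge0 sqrtC_ge0 nrm2_ge0.
by rewrite geC0_conj // -expr2 exprVn sqrtCK.
Qed.

Lemma proj_span2_row_mx :
  row_mx ((vnorm u)^-1 *: u) ((vnorm v)^-1 *: v) *m
    adjmx (row_mx ((vnorm u)^-1 *: u) ((vnorm v)^-1 *: v)) = proj_span2.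
Proof.
rewrite adjmx_row mul_row_col !adjmxZ -!scalemxAl -!scalemxAr !scalerA.
by rewrite !vnorm_mul_conj.
Qed.

Lemma proj_span2_herm : is_herm proj_span2.
Proof.
rewrite /is_herm /proj_span2 adjmxD !adjmxZ !adjmxM !adjmxK.
by rewrite !geC0_conj // invr_ge0 nrm2_ge0.
Qed.

Hypotheses (u_gt0 : 0 < nrm2 u) (v_gt0 : 0 < nrm2 v) (uv0 : adjmx u *m v = 0).

Let vu0 : adjmx v *m u = 0.
Proof. by rewrite -[LHS]adjmxK adjmxM adjmxK uv0 /adjmx map_mx0 trmx0. Qed.

Lemma proj_span2_fixes_u : proj_span2 *m u = u.
Proof.
rewrite /proj_span2 mulmxDl -!scalemxAl -!mulmxA vu0 mulmx0 scaler0 addr0.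
rewrite [adjmx u *m u]mx11_scalar adjmx_mul_self mul_mx_scalar scalerA.
by rewrite mulVf ?scale1r // gt_eqF.
Qed.

Lemma proj_span2_fixes_v : proj_span2 *m v = v.
Proof.
rewrite /proj_span2 mulmxDl -!scalemxAl -!mulmxA uv0 mulmx0 scaler0 add0r.
rewrite [adjmx v *m v]mx11_scalar adjmx_mul_self mul_mx_scalar scalerA.
by rewrite mulVf ?scale1r // gt_eqF.
Qed.

Lemma proj_span2_idem : proj_span2 *m proj_span2 = proj_span2.
Proof.
have adjP w : proj_span2 *m w = w -> adjmx w *m proj_span2 = adjmx w.
  by move=> Pw; rewrite -[LHS]adjmxK adjmxM adjmxK proj_span2_herm Pw.
rewrite {1}/proj_span2 mulmxDl -!scalemxAl -!mulmxA.
by rewrite !adjP ?proj_span2_fixes_u ?proj_span2_fixes_v.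
Qed.

Lemma qform_proj_span2 (X : 'M[C]_n) w w' :
  proj_span2 *m w = w -> proj_span2 *m w' = w' ->
  qform w (proj_span2 *m X *m proj_span2) w' = qform w X w'.
Proof. by move=> Pw Pw'; rewrite qform_mul proj_span2_herm Pw Pw'. Qed.

End Projection.

Section Compression.
Variable R : realType.
Local Notation C := R[i].
Variables (n : nat) (u v : 'cV[C]_n) (X : 'M[C]_n).
Local Notation P := (proj_span2 u v).

Definition residual : C := \tr ((1%:M - P) *m X *m (1%:M - P)).

Definition compress : 'M[C]_n :=
  P *m X *m P + (residual / nrm2 v) *: (v *m adjmx v).

Hypotheses (u_gt0 : 0 < nrm2 u) (v_gt0 : 0 < nrm2 v) (uv0 : adjmx u *m v = 0).
Hypotheses (hX : is_herm X) (psdX : is_psd X).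

Let P_herm : is_herm P. Proof. exact: proj_span2_herm. Qed.
Let Pu : P *m u = u. Proof. exact: proj_span2_fixes_u. Qed.
Let Pv : P *m v = v. Proof. exact: proj_span2_fixes_v. Qed.

Let vu_entry0 : (adjmx v *m u) ord0 ord0 = 0.
Proof. by rewrite adjmx_mul_conj uv0 mxE rmorph0. Qed.

Let compl_herm : is_herm (1%:M - P).
Proof. by rewrite /is_herm adjmxD adjmxN adjmx1 P_herm. Qed.

Let compl_idem : (1%:M - P) *m (1%:M - P) = 1%:M - P.
Proof.
rewrite mulmxBl mul1mx mulmxBr mulmx1 proj_span2_idem //.
by rewrite subrr subr0.
Qed.

Lemma residual_ge0 : 0 <= residual.
Proof. exact: mxtrace_sandwich_ge0. Qed.

Lemma residual_eq0 : residual = 0 -> X = P *m X *m P.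
Proof.
move=> /(mxtrace_sandwich_eq0 hX psdX compl_herm); rewrite mulmxBr mulmx1.
move=> /eqP; rewrite subr_eq0 => /eqP XP.
have PX : X = P *m X by rewrite -[LHS]hX [in LHS]XP adjmxM P_herm hX.
by rewrite -PX.
Qed.

Lemma compress_herm : is_herm compress.
Proof.
rewrite /is_herm adjmxD adjmxZ !adjmxM adjmxK P_herm hX mulmxA.
by rewrite geC0_conj // divr_ge0 ?invr_ge0 ?residual_ge0 ?nrm2_ge0.
Qed.

Lemma compress_psd : is_psd compress.
Proof.
move=> w; rewrite qformD qformZ qform_mul qform_outer adjmx_mul_conj P_herm.
rewrite -normCKC addr_ge0 ?mulr_ge0 ?divr_ge0 ?exprn_ge0 ?invr_ge0 ?nrm2_ge0 //.
exact: residual_ge0.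
Qed.

Lemma mxtrace_compress : \tr compress = \tr X.
Proof.
rewrite mxtraceD mxtraceZ (mxtrace_mulC v) [adjmx v *m v]mx11_scalar adjmx_mul_self.
rewrite mxtrace_scalar mulr1n divfK ?gt_eqF // /residual.
rewrite (mxtrace_mulC (_ *m X) (1%:M - P)) (mxtrace_mulC (P *m X)) !mulmxA.
by rewrite proj_span2_idem // compl_idem -mxtraceD -mulmxDl addrC subrK mul1mx.
Qed.

Lemma qform_compress_uu : qform u compress u = qform u X u.
Proof.
by rewrite qformD qformZ qform_outer (qform_proj_span2 _ Pu Pu) vu_entry0 !mulr0 addr0.
Qed.

Lemma qform_compress_uv : qform u compress v = qform u X v.
Proof.
rewrite qformD qformZ qform_outer (qform_proj_span2 _ Pu Pv) uv0 mxE.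
by rewrite mul0r mulr0 addr0.
Qed.

Lemma qform_compress_vv : qform v compress v = qform v X v + residual * nrm2 v.
Proof.
rewrite qformD qformZ qform_outer (qform_proj_span2 _ Pv Pv) !adjmx_mul_self.
by rewrite mulrA divfK ?gt_eqF.
Qed.

End Compression.

Section Steering.
Variable R : realType.

Definition dsphase (n k : nat) (t : R) : R :=
  pi * cos t * (n%:R - (2 * k + 1)%:R) / 2.

Lemma is_derive_sphase n k (t : R) : is_derive t (1 : R) (sphase n k) (dsphase n k t).
Proof.
have -> : sphase n k = (pi * (n%:R - (2 * k + 1)%:R) / 2) \*: (@sin R).
  by apply/funext => s; rewrite /sphase /= /GRing.scale /=; ring.
have -> : dsphase n k t = (pi * (n%:R - (2 * k + 1)%:R) / 2) *: cos t.
  by rewrite /dsphase /GRing.scale /=; ring.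
exact: is_deriveZ.
Qed.

Lemma steerE n (t : R) (k : 'I_n) :
  steer n t k ord0 = (cos (sphase n k t)) +i* (- sin (sphase n k t)).
Proof. by rewrite mxE. Qed.

Lemma dsteerE n (t : R) (k : 'I_n) : dsteer n t k ord0 =
  (- sin (sphase n k t) * dsphase n k t) +i* (- (cos (sphase n k t) * dsphase n k t)).
Proof.
have dcos := is_derive1_comp (is_derive_cos (sphase n k t)) (is_derive_sphase n k t).
have dsin := is_deriveN (is_derive1_comp (is_derive_sin (sphase n k t))
                                         (is_derive_sphase n k t)).
by rewrite mxE !derive1E !derive_val.
Qed.

Lemma steer_conj_dsteer n (t : R) (k : 'I_n) :
  (steer n t k ord0)^*%R * dsteer n t k ord0 = 'i * (- dsphase n k t)%:C.
Proof.
rewrite steerE dsteerE; have := cos2Dsin2 (sphase n k t).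
set c := cos _; set s := sin _; set d := dsphase n k t => cs1.
apply/eqP; rewrite eq_complex /=; apply/andP; split; apply/eqP; first by ring.
by rewrite mul0r add0r mul1r -[RHS]mulr1 -cs1; ring.
Qed.

Lemma normr_steer n (t : R) (k : 'I_n) : `|steer n t k ord0| ^+ 2 = 1.
Proof. by rewrite -add_Re2_Im2 steerE /= sqrrN cos2Dsin2. Qed.

Lemma normr_dsteer n (t : R) (k : 'I_n) :
  `|dsteer n t k ord0| ^+ 2 = (dsphase n k t ^+ 2)%:C.
Proof.
rewrite -add_Re2_Im2 dsteerE /=; congr (_%:C); have := cos2Dsin2 (sphase n k t).
set c := cos _; set s := sin _; set d := dsphase n k t => cs1.
by rewrite -[RHS]mulr1 -cs1; ring.
Qed.

Lemma sum_odd n : (\sum_(k < n) (2 * k + 1))%N = (n * n)%N.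
Proof. by elim: n => [|n IHn]; rewrite ?big_ord0 // big_ord_recr /= IHn; lia. Qed.

Lemma sum_dsphase n (t : R) : \sum_(k < n) dsphase n k t = 0.
Proof.
have -> : \sum_(k < n) dsphase n k t =
          pi * cos t / 2 * \sum_(k < n) (n%:R - (2 * k + 1)%:R).
  by rewrite mulr_sumr; apply: eq_bigr => k _; rewrite /dsphase; ring.
by rewrite sumrB sumr_const card_ord -natr_sum sum_odd natrM mulr_natr subrr mulr0.
Qed.

Lemma adjmx_steer_dsteer n (t : R) : adjmx (steer n t) *m dsteer n t = 0.
Proof.
apply/matrixP => i j; rewrite !ord1 !mxE.
under eq_bigr => k _ do rewrite adjmxE steer_conj_dsteer.
by rewrite -mulr_sumr -rmorph_sum sumrN sum_dsphase oppr0 mulr0.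
Qed.

Lemma nrm2_steer_gt0 n (t : R) : (0 < n)%N -> 0 < nrm2 (steer n t).
Proof.
move=> n_gt0; apply: (@nrm2_gt0 _ _ _ (Ordinal n_gt0)); apply/eqP => a0.
have := normr_steer t (Ordinal n_gt0); rewrite a0 normr0 expr0n => /eqP.
by rewrite eq_sym oner_eq0.
Qed.

Lemma nrm2_dsteer_gt0 n (t : R) : (2 <= n)%N -> - (pi / 2) < t < pi / 2 ->
  0 < nrm2 (dsteer n t).
Proof.
move=> n_ge2 ht; have n_gt0 : (0 < n)%N by apply: leq_trans n_ge2.
have d0 : dsphase n 0 t != 0.
  rewrite /dsphase muln0 add0n !mulf_neq0 ?invr_eq0 ?pnatr_eq0 ?gt_eqF ?pi_gt0 //.
    exact: cos_gt0_pihalf.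
  by rewrite subr_gt0 ltr1n.
apply: (@nrm2_gt0 _ _ _ (Ordinal n_gt0)); apply/eqP => a0.
have := normr_dsteer t (Ordinal n_gt0); rewrite a0 normr0 expr0n => /eqP.
by rewrite eq_complex /= eqxx andbT eq_sym sqrf_eq0 (negbTE d0).
Qed.

End Steering.

Lemma ltr_crb_ratio (F : numFieldType) (Q B B' x y z e : F) :
  0 < Q -> 0 < B -> 0 < B' -> 0 < x -> 0 <= y - `|z| ^+ 2 / x -> 0 < e ->
  Q / (B' * x + B * (y + e) - `|B * z| ^+ 2 / (B * x)) <
  Q / (B' * x + B * y - `|B * z| ^+ 2 / (B * x)).
Proof.
move=> Q_gt0 B_gt0 B'_gt0 x_gt0 schur e_gt0.
have denomE y' : B' * x + B * y' - `|B * z| ^+ 2 / (B * x) =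
                 B' * x + B * (y' - `|z| ^+ 2 / x).
  by rewrite normrM exprMn gtr0_norm //; field; rewrite !gt_eqF.
have denom_gt0 : 0 < B' * x + B * (y - `|z| ^+ 2 / x).
  by rewrite ltr_wpDr ?mulr_ge0 ?mulr_gt0 // ltW.
rewrite !denomE (_ : B' * x + _ = B' * x + B * (y - `|z| ^+ 2 / x) + B * e); last by ring.
have Be_gt0 : 0 < B * e by rewrite mulr_gt0.
rewrite ltr_pM2l // ltf_pV2 ?posrE; [by rewrite ltrDl | by rewrite addr_gt0 | by []].
Qed.

Section CramerRaoBounds.
Variable R : realType.
Local Notation C := R[i].
Variables (N M Ne : nat) (theta phi pt sigr : R) (c3 c4 : C) (L : nat).
Hypotheses (hN : (2 <= N)%N) (hM : (2 <= M)%N)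
  (htheta : - (pi / 2) < theta < pi / 2)
  (hc3 : c3 != 0) (hsig : 0 < sigr) (hL : (1 <= L)%N).
Local Notation a := (steer N theta).
Local Notation a' := (dsteer N theta).

Lemma crb_theta_lt (X Y : 'M[C]_N) e :
  is_herm X -> is_psd X -> 0 < qform a X a ->
  qform a Y a = qform a X a -> qform a Y a' = qform a X a' ->
  qform a' Y a' = qform a' X a' + e -> 0 < e ->
  crb_theta M theta sigr c3 L Y < crb_theta M theta sigr c3 L X.
Proof.
move=> hX psdX x_gt0 Eaa Eaa' Ea'a' e_gt0.
rewrite /crb_theta Eaa Eaa' Ea'a'; apply: ltr_crb_ratio => //.
- rewrite divr_gt0 ?ltcR ?exprn_gt0 // !mulr_gt0 ?exprn_gt0 ?normr_gt0 //.
  by rewrite ltr0n.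
- by rewrite nrm2_steer_gt0 // (leq_trans _ hM).
- exact: nrm2_dsteer_gt0.
- exact: psd_schur.
Qed.

Lemma objective_lt (X Y : 'M[C]_N) e :
  is_herm X -> is_psd X -> 0 < qform a X a ->
  qform a Y a = qform a X a -> qform a Y a' = qform a X a' ->
  qform a' Y a' = qform a' X a' + e -> 0 < e ->
  objective M Ne theta phi sigr c3 c4 L Y < objective M Ne theta phi sigr c3 c4 L X.
Proof.
move=> hX psdX x_gt0 Eaa Eaa' Ea'a' e_gt0.
rewrite /objective {1}/crb_phi Eaa ltrD2r.
exact: crb_theta_lt hX psdX x_gt0 Eaa Eaa' Ea'a' e_gt0.
Qed.

Let a_gt0 : 0 < nrm2 a.
Proof. by rewrite nrm2_steer_gt0 // (leq_trans _ hN). Qed.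

Let a'_gt0 : 0 < nrm2 a'.
Proof. exact: nrm2_dsteer_gt0. Qed.

Let aa'0 : adjmx a *m a' = 0.
Proof. exact: adjmx_steer_dsteer. Qed.

Lemma feasible_compress (X : 'M[C]_N) :
  feasible theta pt X -> feasible theta pt (compress a a' X).
Proof.
move=> [hX [psdX [trX x_gt0]]].
split; [exact: compress_herm | split; [exact: compress_psd |]].
by rewrite mxtrace_compress // qform_compress_uu.
Qed.

Lemma objective_compress_lt (X : 'M[C]_N) :
  feasible theta pt X -> 0 < residual a a' X ->
  objective M Ne theta phi sigr c3 c4 L (compress a a' X) <
  objective M Ne theta phi sigr c3 c4 L X.
Proof.
move=> [hX [psdX [_ x_gt0]]] d_gt0.
apply: (objective_lt hX psdX x_gt0 _ _ _ (mulr_gt0 d_gt0 a'_gt0)).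
- exact: qform_compress_uu.
- exact: qform_compress_uv.
- exact: qform_compress_vv.
Qed.

End CramerRaoBounds.

Unset Implicit Arguments.

Theorem lemma1 (R : realType) (N M Ne : nat) (theta phi pt sigr : R)
    (c3 c4 : complex R) (L : nat)
    (hN : (2 <= N)%N) (hM : (2 <= M)%N) (hNe : (2 <= Ne)%N)
    (htheta : - (pi / 2) < theta < pi / 2) (hphi : - (pi / 2) < phi < pi / 2)
    (hpt : 0 < pt) (hc3 : c3 != 0) (hc4 : c4 != 0) (hsig : 0 < sigr)
    (hL : (1 <= L)%N)
    (Rx : 'M[complex R]_N) :
  optimal M Ne theta phi pt sigr c3 c4 L Rx ->
  exists Lam : 'M[complex R]_2,
    is_herm Lam /\ is_psd Lam /\
    Rx = Umx N theta *m Lam *m adjmx (Umx N theta).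
Proof.
move=> [feasRx opt]; have [hRx [psdRx _]] := feasRx.
set a := steer N theta; set a' := dsteer N theta.
have d0 : residual a a' Rx = 0.
  have := residual_ge0 a a' psdRx; rewrite le0r => /orP[/eqP // | d_gt0].
  have := opt _ (feasible_compress hN htheta feasRx).
  by rewrite lt_geF // (objective_compress_lt Ne phi c4 hN hM htheta hc3 hsig hL feasRx).
have UU : Umx N theta *m adjmx (Umx N theta) = proj_span2 a a' := proj_span2_row_mx a a'.
exists (adjmx (Umx N theta) *m Rx *m Umx N theta).
split; [exact: herm_adj_sandwich | split; [exact: psd_adj_sandwich |]].
by rewrite !mulmxA -mulmxA UU {1}(residual_eq0 hRx psdRx d0).
Qed.
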